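(* Let $H$ be a connected graph and consider Graph Substructure Networks (GSN, in either the GSN-v or the GSN-e variant) whose structural features are computed from the substructure collection $\mathcal{H}=\{H\}$. Suppose one of the following holds: (1) $H$ is not a star graph (of any size; here single vertices and single edges count as star graphs), and the structural features are computed by (not necessarily induced) subgraph matching, i.e. one counts all subgraphs $G_S$ of $G$ with $G_S\simeq H$, $\mathcal{V}_{G_S}\subseteq\mathcal{V}_G$, $\mathcal{E}_{G_S}\subseteq\mathcal{E}_G$; or (2) $H$ is neither a single vertex nor a single edge, and the structural features are computed by induced subgraph matching, i.e. one counts only subgraphs $G_S\simeq H$ with $\mathcal{E}_{G_S}=\mathcal{E}_G\cap(\mathcal{V}_{G_S}\times\mathcal{V}_{G_S})$. Then GSN is strictly more powerful than MPNNs and than the 1-WL test: (a) every function on graphs computable by an MPNN is computable by a GSN, and for any two (vertex-labelled) graphs that the 1-WL test distinguishes there exists a GSN (with suitable, e.g. injective, update and aggregation functions) producing different graph-level outputs for them; and (b) there exist two graphs $G_1,G_2$ that the 1-WL test (and hence every MPNN) does not distinguish, but for which some GSN produces different graph-level outputs.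
   Context: Graphs are finite, simple, undirected, with vertex set $\mathcal{V}_G$ and edge set $\mathcal{E}_G$, and possibly with vertex features (labels) from a countable set and edge features $\mathbf{e}_{u,v}$. Two graphs are isomorphic ($G\simeq H$) if there is an adjacency-preserving bijection between their vertex sets. For a graph $H$, $\mathrm{Aut}(H)$ is its automorphism group; the vertex orbits of $H$ are the classes $O^V_{H,1},\dots,O^V_{H,d_H}$ of the partition of $\mathcal{V}_H$ under $\mathrm{Aut}(H)$. Every automorphism $g$ induces a map $(u,v)\mapsto(g(u),g(v))$ on edges; the resulting classes of (oriented) edges are the edge orbits $O^E_{H,1},\dots$. Vertex structural features: for a graph $G$, a vertex $v$ and orbit index $i$, $x^V_{H,i}(v)=|\{G_S\subseteq G: G_S\simeq H,\ v\in\mathcal{V}_{G_S},\ f(v)\in O^V_{H,i}\}|$, where $f:\mathcal{V}_{G_S}\to\mathcal{V}_H$ is any isomorphism (the orbit does not depend on the choice). Edge structural features: $x^E_{H,i}(u,v)=|\{G_S\simeq H:(u,v)\in\mathcal{E}_{G_S},\ (f(u),f(v))\in O^E_{H,i}\}|$. For a collection $\mathcal{H}=\{H_1,\dots,H_K\}$, $\mathbf{x}^V_v$ and $\mathbf{x}^E_{u,v}$ are the concatenations over all $H\in\mathcal{H}$ and all orbits. A GSN layer updates vertex states by $\mathbf{h}^{t+1}_v=\mathrm{UP}^{t+1}(\mathbf{h}^t_v,\mathbf{m}^{t+1}_v)$, where for GSN-v $\mathbf{m}^{t+1}_v=M^{t+1}(\{\!\{(\mathbf{h}^t_v,\mathbf{h}^t_u,\mathbf{x}^V_v,\mathbf{x}^V_u,\mathbf{e}_{u,v})\}\!\}_{u\in\mathcal{N}(v)})$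 and for GSN-e $\mathbf{m}^{t+1}_v=M^{t+1}(\{\!\{(\mathbf{h}^t_v,\mathbf{h}^t_u,\mathbf{x}^E_{u,v},\mathbf{e}_{u,v})\}\!\}_{u\in\mathcal{N}(v)})$; here $\{\!\{\cdot\}\!\}$ denotes a multiset, $\mathrm{UP}^{t+1}$ is an arbitrary function and $M^{t+1}$ an arbitrary function on multisets, and $\mathbf{h}^0_v$ are the input vertex features. A graph-level output is obtained by applying a readout function to the multiset of final vertex states (e.g. a sum followed by a function). An MPNN is the same architecture without the structural features $\mathbf{x}^V,\mathbf{x}^E$. The 1-WL test assigns initial colours $c^0_v$ (the vertex labels) and refines $c^{t+1}_v=\mathrm{HASH}(c^t_v,\{\!\{c^t_u\}\!\}_{u\in\mathcal{N}(v)})$ with an injective $\mathrm{HASH}$; it distinguishes two graphs if their colour histograms differ at some iteration. A star graph is $K_{1,m}$ for some $m\ge 0$. *)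

From Stdlib Require Import List Permutation.
From mathcomp Require Import all_boot all_fingroup.
Set Implicit Arguments. Unset Strict Implicit. Unset Printing Implicit Defensive.

Record sgraph := SGraph {
  sV : finType;
  sadj : rel sV;
  sadj_sym : symmetric sadj;
  sadj_irr : irreflexive sadj }.

(* Finite simple graph with vertex labels (countable set: nat) and edge
   features e_{u,v} (nat). *)
Record graph := Graph {
  gS : sgraph;
  vlab : sV gS -> nat;
  elab : sV gS -> sV gS -> nat }.

Notation gV G := (sV (gS G)).
Notation gadj G := (@sadj (gS G)).

Definition connected (H : sgraph) : Prop :=
  0 < #|sV H| /\ forall x y : sV H, connect (@sadj H) x y.

(* K_{1,m}, m >= 0 : some centre c adjacent exactly to all other vertices,
   no other edges. *)
Definition is_star (H : sgraph) : Prop :=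
  exists c : sV H, forall x y, sadj x y = (x != y) && ((x == c) || (y == c)).

Definition single_vertex (H : sgraph) : Prop := #|sV H| = 1.
Definition single_edge (H : sgraph) : Prop :=
  #|sV H| = 2 /\ exists x y : sV H, sadj x y.

Definition is_aut (H : sgraph) (g : {perm sV H}) : bool :=
  [forall a, forall b, sadj (g a) (g b) == sadj a b].

Definition in_vorbit (H : sgraph) (w w' : sV H) : bool :=
  [exists g : {perm sV H}, is_aut g && (g w == w')].

Definition in_eorbit (H : sgraph) (ab ab' : sV H * sV H) : bool :=
  [exists g : {perm sV H}, is_aut g && ((g ab.1, g ab.2) == ab')].

(* A subgraph G_S is a pair (V_S, E_S); E_S is a symmetric set of ordered
   pairs (i.e. a set of unordered edges), contained in E_G and in V_S x V_S. *)
Definition subg (V : finType) := ({set V} * {set (V * V)})%type.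

Definition is_subgraph (G : sgraph) (P : subg (sV G)) : bool :=
  [forall e in P.2, [&& e.1 \in P.1, e.2 \in P.1, sadj e.1 e.2 & (e.2, e.1) \in P.2]].

Definition is_induced (G : sgraph) (P : subg (sV G)) : bool :=
  P.2 == [set e | [&& e.1 \in P.1, e.2 \in P.1 & sadj e.1 e.2]].

Inductive match_mode := NonInduced | Induced.

Definition matches (m : match_mode) (G : sgraph) (P : subg (sV G)) : bool :=
  match m with
  | NonInduced => is_subgraph P
  | Induced => is_subgraph P && is_induced P
  end.

(* f (restricted to V_S) is an isomorphism G_S ~ H *)
Definition is_iso (G H : sgraph) (P : subg (sV G)) (f : {ffun sV G -> sV H}) : bool :=
  [&& [forall x in P.1, forall y in P.1, (f x == f y) ==> (x == y)],
      [forall h, exists x in P.1, f x == h] &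
      [forall x in P.1, forall y in P.1, ((x, y) \in P.2) == sadj (f x) (f y)]].

(* Vertex features: x^V_H(v), given as the function w |-> x^V_{H,i}(v)
   where i is the orbit of w (an injective re-encoding of the vector
   (x^V_{H,i}(v))_i). *)
Definition xV (m : match_mode) (H : sgraph) (G : sgraph) (v : sV G) : sV H -> nat :=
  fun w => #|[set P : subg (sV G) | [&& matches m P, v \in P.1 &
              [exists f : {ffun sV G -> sV H}, is_iso P f && in_vorbit w (f v)]]]|.

(* Edge features: x^E_H(u,v), as the function (a,b) |-> x^E_{H,i}(u,v)
   where i is the edge orbit of (a,b). *)
Definition xE (m : match_mode) (H : sgraph) (G : sgraph) (u v : sV G)
  : sV H * sV H -> nat :=
  fun ab => #|[set P : subg (sV G) | [&& matches m P, (u, v) \in P.2 &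
              [exists f : {ffun sV G -> sV H}, is_iso P f && in_eorbit ab (f u, f v)]]]|.

(* A generic message-passing network with extra per-pair input of type X.
   Multiset functions are functions on lists invariant under permutation. *)
Record net (X S Mg Out : Type) := Net {
  n_layers : nat;
  n_init : nat -> S;                      (* h^0_v from the input vertex label *)
  n_msg : nat -> list (S * S * X * nat) -> Mg;
  n_msg_inv : forall t l1 l2, Permutation l1 l2 -> n_msg t l1 = n_msg t l2;
  n_up : nat -> S -> Mg -> S;
  n_read : list S -> Out;
  n_read_inv : forall l1 l2, Permutation l1 l2 -> n_read l1 = n_read l2 }.

Fixpoint net_states X S Mg Out (N : net X S Mg Out) (G : graph)
    (x : gV G -> gV G -> X) (t : nat) : gV G -> S :=
  match t with
  | 0 => fun v => n_init N (vlab v)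
  | t'.+1 => fun v =>
      let h := net_states N x t' in
      n_up N t' (h v)
        (n_msg N t' [seq (h v, h u, x v u, elab u v) | u <- enum (gV G) & gadj G v u])
  end.

Definition net_out X S Mg Out (N : net X S Mg Out) (G : graph)
    (x : gV G -> gV G -> X) : Out :=
  n_read N [seq net_states N x (n_layers N) v | v <- enum (gV G)].

Definition mpnn_out S Mg Out (N : net unit S Mg Out) (G : graph) : Out :=
  @net_out _ _ _ _ N G (fun _ _ => tt).

Inductive gsn_variant := GSNv | GSNe.

(* Structural input for the message from neighbour u to v. *)
Definition feat_ty (H : sgraph) (var : gsn_variant) : Type :=
  match var with
  | GSNv => ((sV H -> nat) * (sV H -> nat))%type
  | GSNe => (sV H * sV H -> nat)%type
  end.

Definition feat (m : match_mode) (H : sgraph) (var : gsn_variant) (G : graph)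
    (v u : gV G) : feat_ty H var :=
  match var return feat_ty H var with
  | GSNv => (@xV m H (gS G) v, @xV m H (gS G) u)
  | GSNe => @xE m H (gS G) u v
  end.

Definition gsn_out (m : match_mode) (H : sgraph) (var : gsn_variant) S Mg Out
    (N : net (feat_ty H var) S Mg Out) (G : graph) : Out :=
  @net_out _ _ _ _ N G (@feat m H var G).

(* Injective HASH on (colour, multiset of colours): the multiset is
   represented by its sorted list; pickle is injective. *)
Definition wl_hash (c : nat) (s : seq nat) : nat := pickle (c, sort leq s).

Fixpoint wl_col (G : graph) (t : nat) : gV G -> nat :=
  match t with
  | 0 => fun v => vlab v
  | t'.+1 => fun v =>
      wl_hash (wl_col t' v) [seq wl_col t' u | u <- enum (gV G) & gadj G v u]
  end.

Definition wl_distinguishes (G1 G2 : graph) : Prop :=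
  exists t, ~~ perm_eq [seq wl_col t v | v <- enum (gV G1)]
                       [seq wl_col t v | v <- enum (gV G2)].

(* Part (a): a GSN may ignore its structural features, so it runs any MPNN, in
   particular the one whose injective update computes the 1-WL colours.
   Part (b): in a d-regular graph every vertex receives the same 1-WL colour and
   the same MPNN state at every round, so two d-regular graphs of the same order
   are indistinguishable by both.  It therefore suffices to exhibit such a pair in
   which only the second graph contains a (matching) copy of H: a one-layer GSN
   that looks for a nonzero structural feature along some edge separates them.
   With n = |V(H)|, the pairs are
   - H not bipartite: the crown graph on 2n vertices (bipartite) against the
     switch graph of H (two copies of H, joined across by the complement of H);
   - H bipartite, not a star, subgraph matching: disjoint copies of K_(n-1)
     against disjoint copies of K_(n-2,n-2) (each colour class of H has at least
     two vertices, hence at most n-2);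
   - H bipartite, induced matching: two disjoint copies of K_n against the switch
     graph, since an induced copy of connected H in the former forces H complete,
     i.e. a single vertex or a single edge. *)

From Pilot Require Import Defs.
From Stdlib Require Import List Permutation.
From mathcomp Require Import all_boot all_fingroup zify.
Set Implicit Arguments. Unset Strict Implicit. Unset Printing Implicit Defensive.

Lemma Permutation_perm_eq (T : eqType) (s1 s2 : seq T) :
  Permutation s1 s2 -> perm_eq s1 s2.
Proof.
elim=> [|x s s' _ ss'|x y s|s s' s'' _ ss' _ s's''] //=.
- by rewrite perm_cons.
- by apply/seq.permP => p /=; rewrite addnCA.
- exact: perm_trans ss' s's''.
Qed.

Lemma Permutation_sort_map (A : Type) (g : A -> nat) (s1 s2 : seq A) :
  Permutation s1 s2 -> sort leq (map g s1) = sort leq (map g s2).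
Proof.
move=> s12; apply/(perm_sortP leq_total leq_trans anti_leq).
exact/Permutation_perm_eq/Permutation_map.
Qed.

Lemma Permutation_has (A : Type) (p : pred A) (s1 s2 : seq A) :
  Permutation s1 s2 -> has p s1 = has p s2.
Proof. by elim=> //= [x s s' _ ->|x y s|s s' s'' _ -> _ ->] //; rewrite orbCA. Qed.

Lemma size_filter_enum (T : finType) (p : pred T) :
  size [seq x <- enum T | p x] = #|p|.
Proof.
rewrite size_filter cardE /enum_mem size_filter count_filter.
by apply: eq_count => x; rewrite /= andbT.
Qed.

Lemma map_const_nseq (A B : Type) (c : B) (s : seq A) :
  [seq c | _ <- s] = nseq (size s) c.
Proof. by elim: s => //= x s ->. Qed.

Section MpnnAsGsn.
Variables (X S Mg Out : Type) (N : net unit S Mg Out).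

Definition forget_feature (p : S * S * X * nat) : S * S * unit * nat :=
  (p.1.1.1, p.1.1.2, tt, p.2).

Lemma forget_feature_msg_inv t (l1 l2 : list (S * S * X * nat)) :
  Permutation l1 l2 ->
  n_msg N t (map forget_feature l1) = n_msg N t (map forget_feature l2).
Proof. by move=> l12; apply/n_msg_inv/Permutation_map. Qed.

Definition ignore_features : net X S Mg Out :=
  @Net X S Mg Out (n_layers N) (n_init N)
    (fun t l => n_msg N t (map forget_feature l)) forget_feature_msg_inv
    (n_up N) (n_read N) (@n_read_inv _ _ _ _ N).

Lemma ignore_features_states (G : graph) (x : gV G -> gV G -> X) t v :
  net_states ignore_features x t v = net_states N (fun _ _ => tt) t v.
Proof.
elim: t v => [|t IH] v //=; rewrite -map_comp IH.
by congr (n_up _ _ _ (n_msg _ _ _)); apply: eq_map => u /=; rewrite !IH.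
Qed.

Lemma ignore_features_out (G : graph) (x : gV G -> gV G -> X) :
  net_out ignore_features x = mpnn_out N G.
Proof.
by congr (n_read _ _); apply: eq_map => v; rewrite ignore_features_states.
Qed.

End MpnnAsGsn.

Section WlNet.
Variables (X : Type) (depth : nat).

Lemma sort_neighbour_states_inv (t : nat) (l1 l2 : list (nat * nat * X * nat)) :
  Permutation l1 l2 ->
  sort leq [seq p.1.1.2 | p <- l1] = sort leq [seq p.1.1.2 | p <- l2].
Proof. exact: Permutation_sort_map. Qed.

Lemma sort_inv (l1 l2 : list nat) : Permutation l1 l2 -> sort leq l1 = sort leq l2.
Proof. by move=> l12; have := Permutation_sort_map id l12; rewrite !map_id. Qed.

Definition wl_net : net X nat (seq nat) (seq nat) :=
  @Net X nat (seq nat) (seq nat) depth id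
    (fun _ l => sort leq [seq p.1.1.2 | p <- l]) sort_neighbour_states_inv
    (fun _ c s => pickle (c, s)) (sort leq) sort_inv.

Lemma wl_net_states (G : graph) (x : gV G -> gV G -> X) t v :
  net_states wl_net x t v = wl_col t v.
Proof.
elim: t v => [|t IH] v //=; rewrite /wl_hash -map_comp IH.
by congr (pickle (_, sort _ _)); apply: eq_map => u /=; rewrite IH.
Qed.

Lemma wl_net_out (G : graph) (x : gV G -> gV G -> X) :
  net_out wl_net x = sort leq [seq wl_col depth v | v <- enum (gV G)].
Proof. by congr (sort _ _); apply: eq_map => v; apply: wl_net_states. Qed.

End WlNet.

Lemma gsn_subsumes_mpnn_wl (H : sgraph) (m : match_mode) (var : gsn_variant) :
  (forall (S Mg Out : Type) (N : net unit S Mg Out),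
      exists (S' Mg' : Type) (N' : net (feat_ty H var) S' Mg' Out),
        forall G : graph, gsn_out m N' G = mpnn_out N G) /\
  (forall G1 G2 : graph, wl_distinguishes G1 G2 ->
      exists (S Mg Out : Type) (N : net (feat_ty H var) S Mg Out),
        gsn_out m N G1 <> gsn_out m N G2).
Proof.
split=> [S Mg Out N | G1 G2 [t wl12]].
  by exists S, Mg, (ignore_features (feat_ty H var) N) => G; apply: ignore_features_out.
exists nat, (seq nat), (seq nat), (wl_net (feat_ty H var) t).
rewrite /gsn_out !wl_net_out => sort12; case/negP: wl12.
exact/(perm_sortP leq_total leq_trans anti_leq).
Qed.

Definition unlabelled (G : sgraph) : graph := @Graph G (fun _ => 0) (fun _ _ => 0).

Definition regular (G : sgraph) (d : nat) : Prop := forall v : sV G, #|sadj v| = d.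

Fixpoint wl_col_regular (d t : nat) : nat :=
  if t is t'.+1 then wl_hash (wl_col_regular d t') (nseq d (wl_col_regular d t')) else 0.

Fixpoint mpnn_state_regular S Mg Out (N : net unit S Mg Out) (d t : nat) : S :=
  if t is t'.+1 then
    let h := mpnn_state_regular N d t' in n_up N t' h (n_msg N t' (nseq d (h, h, tt, 0)))
  else n_init N 0.

Section Regular.
Variables (G : sgraph) (d : nat).
Hypothesis G_regular : regular G d.

Lemma regular_map_neighbours (T : Type) (c : T) (v : sV G) :
  [seq c | u <- enum (sV G) & sadj v u] = nseq d c.
Proof. by rewrite map_const_nseq size_filter_enum G_regular. Qed.

Lemma regular_wl_col t (v : sV G) : @wl_col (unlabelled G) t v = wl_col_regular d t.
Proof.
elim: t v => [|t IH] v //=; rewrite IH -(regular_map_neighbours _ v).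
by congr (wl_hash _ _); apply: eq_map => u; rewrite IH.
Qed.

Lemma regular_mpnn_states S Mg Out (N : net unit S Mg Out) t (v : sV G) :
  net_states N (G := unlabelled G) (fun _ _ => tt) t v = mpnn_state_regular N d t.
Proof.
elim: t v => [|t IH] v //=; rewrite IH -(regular_map_neighbours _ v).
by congr (n_up _ _ _ (n_msg _ _ _)); apply: eq_map => u; rewrite IH.
Qed.

End Regular.

Lemma regular_indistinguishable (G1 G2 : sgraph) (d : nat) :
  regular G1 d -> regular G2 d -> #|sV G1| = #|sV G2| ->
  ~ wl_distinguishes (unlabelled G1) (unlabelled G2) /\
  forall S Mg Out (N : net unit S Mg Out),
    mpnn_out N (unlabelled G1) = mpnn_out N (unlabelled G2).
Proof.
move=> reg1 reg2 card12; split=> [[t]|S Mg Out N].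
  rewrite (eq_map (regular_wl_col reg1 t)) (eq_map (regular_wl_col reg2 t)).
  by rewrite !map_const_nseq -!cardT card12 perm_refl.
congr (n_read _ _).
rewrite (eq_map (regular_mpnn_states reg1 N _)) (eq_map (regular_mpnn_states reg2 N _)).
by rewrite !map_const_nseq -!cardT card12.
Qed.

Definition has_copy (m : match_mode) (H G : sgraph) : Prop :=
  exists (P : Defs.subg (sV G)) (f : {ffun sV G -> sV H}), matches m P && is_iso P f.

Definition embedding (m : match_mode) (H G : sgraph) (phi : sV H -> sV G) : Prop :=
  [/\ injective phi, {homo phi : h k / sadj h k} &
      m = Induced -> {mono phi : h k / sadj h k}].

Lemma matches_subgraph m (G : sgraph) (P : Defs.subg (sV G)) : matches m P -> is_subgraph P.
Proof. by case: m => //= /andP []. Qed.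

Lemma subgraph_edge (G : sgraph) (P : Defs.subg (sV G)) x y :
  is_subgraph P -> (x, y) \in P.2 ->
  [/\ x \in P.1, y \in P.1, sadj x y & (y, x) \in P.2].
Proof. by move=> /forallP /(_ (x, y)) /implyP sub /sub /and4P []. Qed.

Lemma iso_section (G H : sgraph) (P : Defs.subg (sV G)) (f : {ffun sV G -> sV H}) :
  is_iso P f ->
  exists phi : sV H -> sV G,
    [/\ forall h, phi h \in P.1, cancel phi f &
        forall h k, ((phi h, phi k) \in P.2) = sadj h k].
Proof.
move=> /and3P [_ f_onto /forallP f_edges].
have preP h : exists x, (x \in P.1) && (f x == h).
  by apply/existsP; move/forallP: f_onto; apply.
pose phi h := xchoose (preP h).
have phiP1 h : phi h \in P.1 by case/andP: (xchooseP (preP h)).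
have f_phi h : f (phi h) = h by case/andP: (xchooseP (preP h)) => _ /eqP.
exists phi; split=> // h k.
have /implyP/(_ (phiP1 h))/forallP/(_ (phi k)) := f_edges (phi h).
by rewrite phiP1 !f_phi => /eqP.
Qed.

Lemma embedding_of_copy m (H G : sgraph) :
  has_copy m H G -> exists phi : sV H -> sV G, embedding m phi.
Proof.
move=> [P [f /andP [mP /iso_section [phi [phiP1 f_phi phi_edge]]]]].
exists phi; split=> [|h k|m_ind h k]; first exact: can_inj f_phi.
  by rewrite -phi_edge => /(subgraph_edge (matches_subgraph mP)) [].
move: mP; rewrite m_ind => /andP [_ /eqP P2E].
by rewrite -phi_edge P2E inE /= !phiP1.
Qed.

Lemma copy_of_embedding m (H G : sgraph) (phi : sV H -> sV G) :
  sV H -> embedding m phi -> has_copy m H G.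
Proof.
move=> h0 [phi_inj phi_homo phi_mono].
(* [h0] is only the value of [f] off the image of [phi]; without it no [f] need exist. *)
pose P : Defs.subg (sV G) := ([set phi h | h in setT],
  [set (phi e.1, phi e.2) | e in [set e : sV H * sV H | sadj e.1 e.2]]).
pose f := [ffun x => odflt h0 [pick h | phi h == x]].
have f_phi h : f (phi h) = h.
  rewrite ffunE; case: pickP => [k /eqP /phi_inj -> //|/(_ h)].
  by rewrite eqxx.
have inP1 x : reflect (exists h, x = phi h) (x \in P.1).
  by apply: (iffP imsetP) => [[h _ ->]|[h ->]]; exists h.
have phiP1 h : phi h \in P.1 by apply/inP1; exists h.
have phi_edge h k : ((phi h, phi k) \in P.2) = sadj h k.
  apply/imsetP/idP => [[[h' k']] |hk]; last by exists (h, k); rewrite ?inE.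
  by rewrite inE => /= hk' [/phi_inj -> /phi_inj ->].
have P_sub : is_subgraph P.
  apply/forallP => e; apply/implyP => /imsetP [[h k]]; rewrite inE /= => hk ->.
  by rewrite !phiP1 phi_homo // phi_edge sadj_sym.
have P_iso : is_iso P f.
  apply/and3P; split.
  - apply/forallP => x; apply/implyP => /inP1 [h ->].
    apply/forallP => y; apply/implyP => /inP1 [k ->].
    by rewrite !f_phi; apply/implyP => /eqP ->.
  - by apply/forallP => h; apply/existsP; exists (phi h); rewrite phiP1 f_phi eqxx.
  - apply/forallP => x; apply/implyP => /inP1 [h ->].
    apply/forallP => y; apply/implyP => /inP1 [k ->].
    by rewrite !f_phi phi_edge.
exists P, f; case: m phi_mono => /= [_|/(_ erefl) phi_mono]; rewrite P_sub P_iso //= andbT.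
apply/eqP/setP => -[x y]; rewrite [RHS]inE /=.
apply/idP/and3P => [/(subgraph_edge P_sub) [] //|[/inP1 [h ->] /inP1 [k ->]]].
by rewrite phi_mono phi_edge.
Qed.

Lemma embedding_mono m (H G : sgraph) (phi : sV H -> sV G) :
  injective phi -> {mono phi : h k / sadj h k} -> embedding m phi.
Proof. by move=> phi_inj phi_mono; split=> // h k; rewrite phi_mono. Qed.

Lemma sadj_neq (H : sgraph) (x y : sV H) : sadj x y -> x != y.
Proof. by apply: contraTneq => ->; rewrite sadj_irr. Qed.

Lemma connected_locally_constant (H : sgraph) (T : eqType) (g : sV H -> T) :
  connected H -> (forall h k, sadj h k -> g h = g k) -> forall h k, g h = g k.
Proof.
move=> [_ H_conn] g_edge h k; have /connectP [p p_path ->] := H_conn h k.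
by elim: p h p_path => //= x p IH h /andP [/g_edge -> /IH].
Qed.

Lemma connect_neq_step (T : finType) (e : rel T) x y :
  x != y -> connect e x y -> exists z, e x z.
Proof.
move=> xy /connectP [[|z p] /= p_path y_last]; first by rewrite y_last eqxx in xy.
by exists z; case/andP: p_path.
Qed.

Lemma connected_edge (H : sgraph) :
  connected H -> #|sV H| != 1 -> exists h k : sV H, sadj h k.
Proof.
move=> [H_nonempty H_conn] H_not1; have /card_gt0P [x _] := H_nonempty.
have /card_gt0P [y yx] : 0 < #|predC1 x| by rewrite cardC1; lia.
have [z xz] : exists z, sadj x z by apply: (connect_neq_step _ (H_conn x y)); rewrite eq_sym.
by exists x, z.
Qed.

Definition two_colouring (H : sgraph) (c : sV H -> bool) : Prop :=
  forall h k, sadj h k -> c h != c k.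

Definition bipartite (H : sgraph) : bool :=
  [exists c : {ffun sV H -> bool}, [forall h, forall k, sadj h k ==> (c h != c k)]].

Lemma bipartiteP (H : sgraph) :
  reflect (exists c : sV H -> bool, two_colouring c) (bipartite H).
Proof.
apply: (iffP existsP) => [[c /forallP c_col]|[c c_col]].
  by exists c => h k; move/forallP/(_ k)/implyP: (c_col h).
exists [ffun h => c h]; apply/forallP => h; apply/forallP => k.
by apply/implyP; rewrite !ffunE; apply: c_col.
Qed.

Lemma not_bipartite_edge (H : sgraph) : ~~ bipartite H -> exists h k : sV H, sadj h k.
Proof.
move=> nonbip; have /existsP [h /existsP [k hk]] : [exists h : sV H, exists k : sV H, sadj h k].
  apply: contraR nonbip => no_edge; apply/bipartiteP; exists (fun=> true) => h k hk.
  by case/negP: no_edge; apply/existsP; exists h; apply/existsP; exists k.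
by exists h, k.
Qed.

Lemma two_colouring_class_gt1 (H : sgraph) (c : sV H -> bool) :
  connected H -> ~ is_star H -> two_colouring c -> forall b, 1 < #|[pred h | c h == b]|.
Proof.
move=> H_conn nonstar c_col b; rewrite ltnNge; apply/negP => class_le1; apply: nonstar.
(* A class {z} (or an empty one) meets every edge, so H is the star centred at z. *)
have [z class_z] : exists z, forall h, c h == b -> h = z.
  case: (pickP [pred h | c h == b]) => [z zb|no_b]; last first.
    by have [/card_gt0P [x _] _] := H_conn; exists x => h; have := no_b h; rewrite /= => ->.
  by exists z => h hb; move/card_le1P/(_ z zb h): class_le1; rewrite !inE hb => /esym/eqP.
have edge_z h k : sadj h k -> (h == z) || (k == z).
  move/c_col => c_hk; case hb: (c h == b); first by rewrite (class_z h hb) eqxx.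
  have kb : c k == b by move: (c h) (c k) (b) hb c_hk => [] [] [].
  by rewrite (class_z k kb) eqxx orbT.
have adj_z h : h != z -> sadj h z.
  move=> hz; have [u hu] := connect_neq_step hz (H_conn.2 h z).
  by have := edge_z h u hu; rewrite (negbTE hz) /= => /eqP <-.
exists z => x y; apply/idP/andP => [xy|[xy /orP [/eqP xz|/eqP yz]]].
- by split; [apply: sadj_neq xy | apply: edge_z].
- by rewrite xz sadj_sym adj_z // -xz eq_sym.
- by rewrite yz adj_z // -yz.
Qed.

Lemma complete_two_colouring_card (H : sgraph) (c : sV H -> bool) :
  two_colouring c -> (forall h k : sV H, h != k -> sadj h k) -> #|sV H| <= 2.
Proof.
move=> c_col H_complete; rewrite -card_bool; apply: (@leq_card _ _ c) => h k c_hk.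
by apply/eqP; apply: contraT => /H_complete/c_col; rewrite c_hk eqxx.
Qed.

Lemma card_bool_prod (V : finType) (p : pred (bool * V)) :
  #|p| = #|[pred y | p (true, y)]| + #|[pred y | p (false, y)]|.
Proof.
rewrite -!sum1_card (eq_bigl (fun u : bool * V => xpredT u.1 && p (u.1, u.2))).
  by rewrite -(pair_big_dep xpredT (fun b y => p (b, y)) (fun _ _ => 1)) big_bool.
by case.
Qed.

Section Layered.
Variables (V : finType) (same cross : rel V).
Hypotheses (same_sym : symmetric same) (same_irr : irreflexive same).
Hypothesis cross_sym : symmetric cross.

Definition layered_adj (u v : bool * V) : bool :=
  if u.1 == v.1 then same u.2 v.2 else cross u.2 v.2.

Lemma layered_adj_sym : symmetric layered_adj.
Proof. by move=> u v; rewrite /layered_adj eq_sym same_sym cross_sym. Qed.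

Lemma layered_adj_irr : irreflexive layered_adj.
Proof. by move=> u; rewrite /layered_adj eqxx same_irr. Qed.

Definition layered := SGraph layered_adj_sym layered_adj_irr.

Lemma layered_regular d :
  (forall x, #|same x| + #|cross x| = d) -> regular layered d.
Proof.
move=> deg [[] x]; rewrite card_bool_prod -(deg x); last rewrite addnC.
all: by congr (_ + _); apply: eq_card.
Qed.

End Layered.

Definition coadj (H : sgraph) : rel (sV H) := fun x y => (x != y) && ~~ sadj x y.

Lemma coadj_sym (H : sgraph) : symmetric (@coadj H).
Proof. by move=> x y; rewrite /coadj eq_sym sadj_sym. Qed.

Definition distinct (V : finType) : rel V := fun x y => x != y.

Lemma distinct_sym (V : finType) : symmetric (@distinct V).
Proof. by move=> x y; rewrite /distinct eq_sym. Qed.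

Lemma distinct_irr (V : finType) : irreflexive (@distinct V).
Proof. by move=> x; rewrite /distinct eqxx. Qed.

Lemma card_distinct (V : finType) (x : V) : #|distinct x| = #|V|.-1.
Proof. by rewrite -(cardC1 x); apply: eq_card => y; rewrite !inE eq_sym. Qed.

Definition no_edge (V : finType) : rel V := fun _ _ => false.

Lemma no_edge_sym (V : finType) : symmetric (@no_edge V). Proof. by []. Qed.

Lemma no_edge_irr (V : finType) : irreflexive (@no_edge V). Proof. by []. Qed.

Lemma card_no_edge (V : finType) (x : V) : #|no_edge x| = 0.
Proof. exact: eq_card0. Qed.

Definition switch_graph (H : sgraph) : sgraph :=
  layered (@sadj_sym H) (@sadj_irr H) (@coadj_sym H).

Definition crown_graph (V : finType) : sgraph :=
  layered (@no_edge_sym V) (@no_edge_irr V) (@distinct_sym V).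

Definition twin_cliques (V : finType) : sgraph :=
  layered (@distinct_sym V) (@distinct_irr V) (@no_edge_sym V).

Lemma switch_graph_regular (H : sgraph) : regular (switch_graph H) #|sV H|.-1.
Proof.
apply: layered_regular => x; rewrite -(card_distinct x) -(cardID (sadj x) (distinct x)).
congr (_ + _); apply: eq_card => y; rewrite !unfold_in /coadj /distinct.
  by rewrite andb_idl // => /sadj_neq.
by rewrite andbC.
Qed.

Lemma crown_graph_regular (V : finType) : regular (crown_graph V) #|V|.-1.
Proof. by apply: layered_regular => x; rewrite card_no_edge card_distinct. Qed.

Lemma twin_cliques_regular (V : finType) : regular (twin_cliques V) #|V|.-1.
Proof. by apply: layered_regular => x; rewrite card_no_edge card_distinct addn0. Qed.

Lemma switch_graph_copy m (H : sgraph) : sV H -> has_copy m H (switch_graph H).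
Proof.
move=> h0; apply: (@copy_of_embedding m H (switch_graph H) (pair false) h0).
by apply: embedding_mono => [h k [] //|h k].
Qed.

Lemma crown_graph_bipartite (H : sgraph) (V : finType) (phi : sV H -> sV (crown_graph V)) :
  {homo phi : h k / sadj h k} -> bipartite H.
Proof.
move=> phi_homo; apply/bipartiteP; exists (fun h => (phi h).1) => h k /phi_homo.
by rewrite /= /layered_adj; case: eqP.
Qed.

Lemma twin_cliques_complete (H : sgraph) (V : finType) (phi : sV H -> sV (twin_cliques V)) :
  connected H -> embedding Induced phi -> forall h k : sV H, h != k -> sadj h k.
Proof.
move=> H_conn [phi_inj _ /(_ erefl) phi_mono] h k hk.
have same_layer : (phi h).1 = (phi k).1.
  apply: (@connected_locally_constant H _ (fun h => (phi h).1) H_conn) => x y.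
  by rewrite -phi_mono /= /layered_adj; case: eqP.
rewrite -phi_mono /= /layered_adj same_layer eqxx /distinct.
apply: contra hk => /eqP same_pos; apply/eqP/phi_inj.
exact: injective_projections.
Qed.

Section CliqueCopies.
Variables A B : finType.

Definition clique_copies_adj (u v : A * B) : bool := (u.2 == v.2) && (u.1 != v.1).

Lemma clique_copies_adj_sym : symmetric clique_copies_adj.
Proof. by move=> u v; rewrite /clique_copies_adj eq_sym [u.1 == _]eq_sym. Qed.

Lemma clique_copies_adj_irr : irreflexive clique_copies_adj.
Proof. by move=> u; rewrite /clique_copies_adj !eqxx. Qed.

Definition clique_copies := SGraph clique_copies_adj_sym clique_copies_adj_irr.

Lemma clique_copies_regular : regular clique_copies #|A|.-1.
Proof.
move=> v; rewrite (@eq_card _ _ (setX [set~ v.1] [set v.2])).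
  by rewrite cardsX cardsC1 cards1 muln1.
by move=> u; rewrite unfold_in !inE /clique_copies_adj andbC eq_sym [v.2 == _]eq_sym.
Qed.

Lemma clique_copies_homo_card (H : sgraph) (phi : sV H -> sV clique_copies) :
  connected H -> injective phi -> {homo phi : h k / sadj h k} -> #|sV H| <= #|A|.
Proof.
move=> H_conn phi_inj phi_homo.
have same_clique : forall h k, (phi h).2 = (phi k).2.
  apply: (@connected_locally_constant H _ (fun h => (phi h).2) H_conn) => h k.
  by move/phi_homo => /andP [/eqP].
suff: injective (fun h => (phi h).1) by move/leq_card.
by move=> h k same_pos; apply/phi_inj/injective_projections.
Qed.

End CliqueCopies.

Section BicliqueCopies.
Variables (A : finType) (k : nat).

Definition biclique_copies_adj (u v : A * (bool * 'I_k)) : bool :=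
  (u.1 == v.1) && (u.2.1 != v.2.1).

Lemma biclique_copies_adj_sym : symmetric biclique_copies_adj.
Proof. by move=> u v; rewrite /biclique_copies_adj eq_sym [u.2.1 == _]eq_sym. Qed.

Lemma biclique_copies_adj_irr : irreflexive biclique_copies_adj.
Proof. by move=> u; rewrite /biclique_copies_adj !eqxx. Qed.

Definition biclique_copies := SGraph biclique_copies_adj_sym biclique_copies_adj_irr.

Lemma biclique_copies_regular : regular biclique_copies k.
Proof.
move=> v; rewrite (@eq_card _ _ (setX [set v.1] (setX [set ~~ v.2.1] setT))).
  by rewrite !cardsX !cards1 cardsT card_ord !mul1n.
move=> u; rewrite unfold_in !inE /biclique_copies_adj eq_sym andbT.
by case: u.2.1; case: v.2.1.
Qed.

Lemma biclique_copies_embedding (H : sgraph) (c : sV H -> bool) (a0 : A) :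
  two_colouring c -> (forall b, #|[pred h | c h == b]| <= k) ->
  exists phi : sV H -> sV biclique_copies, embedding NonInduced phi.
Proof.
move=> c_col class_le.
pose class h := enum [pred x | c x == c h].
have pos_lt h : index h (class h) < k.
  by apply: leq_trans (class_le (c h)); rewrite cardE index_mem mem_enum inE.
exists (fun h => (a0, (c h, Ordinal (pos_lt h)))); split=> // [h h' [same_c same_pos]|h h' hh'].
  move: same_pos; rewrite /class -same_c.
  by apply: (index_inj h); rewrite mem_enum inE ?same_c.
by rewrite /= /biclique_copies_adj eqxx c_col.
Qed.

End BicliqueCopies.

Lemma in_vorbit_refl (H : sgraph) (w : sV H) : in_vorbit w w.
Proof.
apply/existsP; exists 1%g; rewrite perm1 eqxx andbT.
by apply/forallP => a; apply/forallP => b; rewrite !perm1.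
Qed.

Lemma in_eorbit_refl (H : sgraph) (ab : sV H * sV H) : in_eorbit ab ab.
Proof.
apply/existsP; exists 1%g; rewrite !perm1 -surjective_pairing eqxx andbT.
by apply/forallP => a; apply/forallP => b; rewrite !perm1.
Qed.

Section CopyDetector.
Variables (H : sgraph) (m : match_mode) (var : gsn_variant).

Definition feature_nonzero : feat_ty H var -> bool :=
  match var return feat_ty H var -> bool with
  | GSNv => fun x => [exists w, 0 < x.1 w]
  | GSNe => fun x => [exists ab, 0 < x ab]
  end.

Lemma has_feature_nonzero_inv (t : nat) (l1 l2 : list (bool * bool * feat_ty H var * nat)) :
  Permutation l1 l2 ->
  has (fun p => feature_nonzero p.1.2) l1 = has (fun p => feature_nonzero p.1.2) l2.
Proof. exact: Permutation_has. Qed.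

Lemma has_id_inv (l1 l2 : list bool) : Permutation l1 l2 -> has id l1 = has id l2.
Proof. exact: Permutation_has. Qed.

Definition copy_detector : net (feat_ty H var) bool bool bool :=
  @Net (feat_ty H var) bool bool bool 1 (fun _ => false)
    (fun _ l => has (fun p => feature_nonzero p.1.2) l) has_feature_nonzero_inv
    (fun _ _ b => b) (has id) has_id_inv.

Lemma copy_detector_out (G : graph) :
  gsn_out m copy_detector G =
  has (fun v => has (fun u => feature_nonzero (feat m H var v u))
                    [seq u <- enum (gV G) | gadj G v u]) (enum (gV G)).
Proof. by rewrite /gsn_out /net_out /= has_map; apply: eq_has => v /=; rewrite has_map. Qed.

Lemma copy_detector_no_copy (G : graph) :
  ~ has_copy m H (gS G) -> gsn_out m copy_detector G = false.
Proof.
move=> no_copy; rewrite copy_detector_out; apply/hasPn => v _; apply/hasPn => u _.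
have no_match (P : Defs.subg (gV G)) (f : {ffun gV G -> sV H}) : matches m P -> ~~ is_iso P f.
  by move=> mP; apply/negP => iso; apply: no_copy; exists P, f; rewrite mP.
rewrite /feature_nonzero /feat; case: var => /=; apply/existsP => -[w];
  rewrite card_gt0 => /set0Pn [P]; rewrite inE => /and3P [mP _ /existsP [f]];
  by rewrite (negbTE (no_match P f mP)).
Qed.

Lemma copy_detector_copy (G : graph) :
  (exists h k : sV H, sadj h k) -> has_copy m H (gS G) -> gsn_out m copy_detector G.
Proof.
move=> [h [k hk]] [P [f /andP [mP P_iso]]].
have [phi [_ _ phi_edge]] := iso_section P_iso.
have xy : (phi h, phi k) \in P.2 by rewrite phi_edge.
have [_ yP xy_adj _] := subgraph_edge (matches_subgraph mP) xy.
rewrite copy_detector_out; apply/hasP; exists (phi k); first exact: mem_enum.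
apply/hasP; exists (phi h); first by rewrite mem_filter sadj_sym xy_adj mem_enum.
rewrite /feature_nonzero /feat; case: var => /=; apply/existsP.
- exists (f (phi k)); apply/card_gt0P; exists P; rewrite !inE mP yP /=.
  by apply/existsP; exists f; rewrite P_iso in_vorbit_refl.
- exists (f (phi h), f (phi k)); apply/card_gt0P; exists P; rewrite !inE mP xy /=.
  by apply/existsP; exists f; rewrite P_iso in_eorbit_refl.
Qed.

End CopyDetector.

Definition gsn_beyond_wl (m : match_mode) (H : sgraph) (var : gsn_variant) : Prop :=
  exists G1 G2 : graph,
    ~ wl_distinguishes G1 G2 /\
    (forall (S Mg Out : Type) (N : net unit S Mg Out), mpnn_out N G1 = mpnn_out N G2) /\
    exists (S Mg Out : Type) (N : net (feat_ty H var) S Mg Out),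
      gsn_out m N G1 <> gsn_out m N G2.

Lemma regular_pair_beyond_wl m (H G1 G2 : sgraph) var d :
  (exists h k : sV H, sadj h k) -> regular G1 d -> regular G2 d -> #|sV G1| = #|sV G2| ->
  ~ has_copy m H G1 -> has_copy m H G2 -> gsn_beyond_wl m H var.
Proof.
move=> H_edge reg1 reg2 card12 no_copy1 copy2.
have [wl12 mpnn12] := regular_indistinguishable reg1 reg2 card12.
exists (unlabelled G1), (unlabelled G2); do 2!split=> //.
exists bool, bool, bool, (copy_detector H var).
rewrite (@copy_detector_no_copy H m var (unlabelled G1) no_copy1).
by rewrite (@copy_detector_copy H m var (unlabelled G2) H_edge copy2).
Qed.

Lemma nonbipartite_beyond_wl m (H : sgraph) var :
  ~~ bipartite H -> gsn_beyond_wl m H var.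
Proof.
move=> nonbip; have H_edge := not_bipartite_edge nonbip; have [h0 _] := H_edge.
apply: (regular_pair_beyond_wl var H_edge (@crown_graph_regular (sV H)) (@switch_graph_regular H)).
- by [].
- by case/embedding_of_copy => phi [_ /crown_graph_bipartite bip _]; rewrite bip in nonbip.
- exact: switch_graph_copy.
Qed.

Lemma bipartite_beyond_wl_noninduced (H : sgraph) var :
  connected H -> ~ is_star H -> bipartite H -> gsn_beyond_wl NonInduced H var.
Proof.
move=> H_conn nonstar /bipartiteP [c c_col].
have class_gt1 := two_colouring_class_gt1 H_conn nonstar c_col.
have classes : #|[pred h | c h == true]| + #|[pred h | c h == false]| = #|sV H|.
  rewrite -(cardC [pred h | c h == true]); congr (_ + _).
  by apply: eq_card => h; rewrite !inE; case: (c h).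
set n := #|sV H| in classes *.
have [gt1_true gt1_false] := (class_gt1 true, class_gt1 false).
have class_le b : #|[pred h | c h == b]| <= n.-2 by case: b; lia.
have a0 : 'I_n.-1 by apply: (@Ordinal _ 0); lia.
have H_edge : exists h k : sV H, sadj h k by apply: connected_edge => //; lia.
have [h0 _] := H_edge.
apply: (@regular_pair_beyond_wl _ H (clique_copies 'I_(n.-1) (bool * 'I_(n.-2))%type)
          (biclique_copies 'I_(n.-1) n.-2) var n.-2 H_edge).
- by have := @clique_copies_regular 'I_(n.-1) (bool * 'I_(n.-2))%type; rewrite card_ord.
- exact: biclique_copies_regular.
- by [].
- case/embedding_of_copy => phi [phi_inj phi_homo _].
  by have := clique_copies_homo_card H_conn phi_inj phi_homo; rewrite card_ord; lia.
- have [phi phi_emb] := biclique_copies_embedding a0 c_col class_le.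
  exact: copy_of_embedding h0 phi_emb.
Qed.

Lemma bipartite_beyond_wl_induced (H : sgraph) var :
  connected H -> ~ single_vertex H -> ~ single_edge H -> bipartite H ->
  gsn_beyond_wl Induced H var.
Proof.
move=> H_conn not_vertex not_edge /bipartiteP [c c_col].
have H_edge := connected_edge H_conn (introN eqP not_vertex).
have [h0 _] := H_edge.
apply: (regular_pair_beyond_wl var H_edge (@twin_cliques_regular (sV H)) (@switch_graph_regular H)).
- by [].
- case/embedding_of_copy => phi /(twin_cliques_complete H_conn).
  move/(complete_two_colouring_card c_col).
  case: H_conn => H_nonempty _ H_le2; apply: not_edge; split=> //.
  by move/eqP: not_vertex; lia.
- exact: switch_graph_copy.
Qed.

Theorem theorem3p1 (H : sgraph) (m : match_mode) (var : gsn_variant) :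
  connected H ->
  (m = NonInduced /\ ~ is_star H) \/
  (m = Induced /\ ~ single_vertex H /\ ~ single_edge H) ->
  (* (a) GSN at least as powerful as MPNNs and 1-WL *)
  ((forall (S Mg Out : Type) (N : net unit S Mg Out),
      exists (S' Mg' : Type) (N' : net (feat_ty H var) S' Mg' Out),
        forall G : graph, gsn_out m N' G = mpnn_out N G) /\
   (forall G1 G2 : graph, wl_distinguishes G1 G2 ->
      exists (S Mg Out : Type) (N : net (feat_ty H var) S Mg Out),
        gsn_out m N G1 <> gsn_out m N G2)) /\
  (* (b) strictly more powerful *)
  (exists G1 G2 : graph,
      ~ wl_distinguishes G1 G2 /\
      (forall (S Mg Out : Type) (N : net unit S Mg Out), mpnn_out N G1 = mpnn_out N G2) /\
      exists (S Mg Out : Type) (N : net (feat_ty H var) S Mg Out),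
        gsn_out m N G1 <> gsn_out m N G2).
Proof.
move=> H_conn H_case; split; first exact: gsn_subsumes_mpnn_wl.
have [bip|nonbip] := boolP (bipartite H); last exact: nonbipartite_beyond_wl.
case: H_case => [[-> nonstar]|[-> [not_vertex not_edge]]].
- exact: bipartite_beyond_wl_noninduced.
- exact: bipartite_beyond_wl_induced.
Qed.
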